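(* For every positive integer $t$, \[ g(3,t)\ge \frac{16t^2+7t+1}{24t^2+15t+3}. \]
   Context: Let $\mathbb{F}$ be a finite field and $x_1,\dots,x_p$ a basis of $\mathbb{F}^p$. A $[t\times m,p]$ array code is a $t\times m$ array whose entries (cells) are linear combinations of $x_1,\dots,x_p$. It has the $k$-PIR property (is a $[t\times m,p]$ $k$-PIR array code) if for every $i\in\{1,\dots,p\}$ there exist $k$ pairwise disjoint sets $S_1,\dots,S_k$ of columns such that for every $j$ the vector $x_i$ lies in the linear span of all entries of the columns in $S_j$. Its PIR rate is $k/m$. For a rational $s>1$ and a positive integer $t$ with $st$ an integer, $g(s,t)$ is the largest PIR rate $k/m$ of a $[t\times m,st]$ $k$-PIR array code (over all finite fields, all $m$ and all $k$). *)

From HB Require Import structures.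
From mathcomp Require Import all_boot all_order all_algebra all_field.
Set Implicit Arguments. Unset Strict Implicit. Unset Printing Implicit Defensive.
Import GRing.Theory Num.Theory.
Local Open Scope ring_scope.

(* A [t x m, p] array code over F: entry (r, c) is a vector of F^p, namely
   its coordinates w.r.t. the basis x_1..x_p (x_i = delta_mx 0 i). *)
Definition array_code (F : finFieldType) (t m p : nat) :=
  'I_t -> 'I_m -> 'rV[F]_p.

Definition col_span (F : finFieldType) (t m p : nat) (C : array_code F t m p)
  (S : {set 'I_m}) : {vspace 'rV[F]_p} :=
  <<[seq C r c | r <- enum 'I_t, c <- enum S]>>%VS.

Definition is_kPIR (F : finFieldType) (t m p k : nat) (C : array_code F t m p) :=
  forall i : 'I_p, exists S : 'I_k -> {set 'I_m},
    (forall j j' : 'I_k, j != j' -> [disjoint S j & S j']) /\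
    (forall j : 'I_k, (delta_mx 0 i : 'rV[F]_p) \in col_span C (S j)).

From HB Require Import structures.
From mathcomp Require Import all_boot all_order all_algebra all_field all_fingroup.
From mathcomp Require Import zify.
Set Implicit Arguments. Unset Strict Implicit. Unset Printing Implicit Defensive.
Import GRing.Theory Num.Theory.
Local Open Scope ring_scope.

(* Take 3t symbols.  For every arrangement s of them there are three kinds of
   columns of height t: head columns s_0, ..., s_{t-1}; mid columns
   s_{t+1}, ..., s_{2t-1}, s_0 + ... + s_t; and tail columns
   s_{2t+1}, ..., s_{3t-1}, s_0 + ... + s_{2t}, in (t+1)(2t+1), 2t(2t+1) and
   2t^2 copies.  A symbol y is read off directly from every head column holding
   it, from every mid column holding it in one of its first t-1 cells and from
   every tail column holding it.  Any other head column is paired with a mid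
   column of the arrangement where y is swapped into the first t+1 positions,
   whose last cell minus the sum of the head column is y; any other tail column
   is paired with a mid column of the arrangement where y is swapped out of the
   first 2t positions, whose cells add up to the last cell of the tail column
   minus y. *)

Section PermutationCount.
Variable T : finType.

Lemma card_perm_inv_eq_le (y x x' : T) :
  (#|[set s : {perm T} | (s^-1)%g y == x]| <= #|[set s : {perm T} | (s^-1)%g y == x']|)%N.
Proof.
rewrite -(card_imset _ (@mulgI _ (tperm x x'))).
apply/subset_leq_card/subsetP => _ /imsetP [s + ->]; rewrite !inE => /eqP sy.
by rewrite invMg permM tpermV sy tpermL.
Qed.

Lemma card_perm_inv_in_fiber (y : T) (P : {pred T}) :
  #|[set s : {perm T} | (s^-1)%g y \in P]| =
  (#|P| * #|[set s : {perm T} | (s^-1)%g y == y]|)%N.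
Proof.
rewrite -sum1_card (partition_big (fun s : {perm T} => (s^-1)%g y) P) => [|s]; last first.
  by rewrite inE.
rewrite -sum_nat_const; apply: eq_bigr => x Px.
have -> : #|[set s : {perm T} | (s^-1)%g y == y]| = #|[set s : {perm T} | (s^-1)%g y == x]|.
  by apply/eqP; rewrite eqn_leq !card_perm_inv_eq_le.
by rewrite -sum1_card; apply: eq_bigl => s; rewrite !inE; apply: andb_idl => /eqP ->.
Qed.

Lemma card_perm_inv_eq (y : T) : #|[set s : {perm T} | (s^-1)%g y == y]| = #|T|.-1`!.
Proof.
have := card_perm_inv_in_fiber y predT.
rewrite (eq_card (B := perm_on [set: T])) => [|s]; last first.
  by rewrite !inE; apply/esym/subsetP => x; rewrite inE.
rewrite card_perm cardsT (eq_cardT (A := predT)) // -cardT.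
have : (0 < #|T|)%N by apply/card_gt0P; exists y.
by case: #|T| => // k _; rewrite factS => /eqP; rewrite eqn_mul2l /= => /eqP.
Qed.

Lemma card_perm_inv_in (y : T) (P : {pred T}) :
  #|[set s : {perm T} | (s^-1)%g y \in P]| = (#|P| * #|T|.-1`!)%N.
Proof. by rewrite card_perm_inv_in_fiber card_perm_inv_eq. Qed.

End PermutationCount.

Lemma card_ord_range (n a b : nat) : (b <= n)%N ->
  #|[pred i : 'I_n | (a <= i < b)%N]| = (b - a)%N.
Proof.
move=> le_bn; rewrite -sum1_card -[RHS]muln1 -sum_nat_const_nat.
rewrite (big_nat_widen _ _ _ _ _ le_bn) big_geq_mkord.
by apply: eq_bigl => i; rewrite andbC.
Qed.

Section ColumnIndexedCode.
Variables (F : finFieldType) (t p : nat) (Col : finType).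
Variable cell : Col -> 'I_t -> 'rV[F]_p.

Definition col_code : array_code F t #|Col| p := fun r c => cell (enum_val c) r.

Definition span_of (A : {set Col}) : {vspace 'rV[F]_p} :=
  col_span col_code [set c | enum_val c \in A].

Lemma cell_in_span (A : {set Col}) c r : c \in A -> cell c r \in span_of A.
Proof.
move=> Ac; rewrite -[c]enum_rankK; apply/memv_span/allpairs_f; rewrite mem_enum //.
by rewrite inE enum_rankK.
Qed.

Lemma col_sum_in_span (A : {set Col}) c : c \in A -> \sum_r cell c r \in span_of A.
Proof. by move=> Ac; apply: memv_suml => r _; apply: cell_in_span. Qed.

Lemma col_code_kPIR k :
  (forall i : 'I_p, exists (K : {set Col}) (R : Col -> {set Col}),
    [/\ #|K| = k,
        {in K &, forall c d, c != d -> [disjoint R c & R d]} &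
        {in K, forall c, delta_mx 0 i \in span_of (R c)}]) ->
  is_kPIR k col_code.
Proof.
move=> recover i; have [K [R [cardK disjR spanR]]] := recover i.
pose key (j : 'I_k) := enum_val (cast_ord (esym cardK) j).
have keyK j : key j \in K by apply: enum_valP.
exists (fun j => [set c | enum_val c \in R (key j)]); split => [j j' neq_jj'|j].
  apply/pred0P => c /=; rewrite !inE; apply/negP => /andP [Rc Rc'].
  have neq_key : key j != key j'.
    by apply: contra neq_jj' => /eqP/enum_val_inj/cast_ord_inj ->.
  by have /pred0P/(_ (enum_val c)) := disjR _ _ (keyK j) (keyK j') neq_key; rewrite /= Rc Rc'.
exact: spanR.
Qed.

End ColumnIndexedCode.

(* Out-of-range values [q >= k] are sent to the junk ordinal [0]. *)
Definition ord_of (k : nat) (k_gt0 : (0 < k)%N) (q : nat) : 'I_k := insubd (Ordinal k_gt0) q.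

Lemma val_ord_of k (k_gt0 : (0 < k)%N) q : (q < k)%N -> ord_of k_gt0 q = q :> nat.
Proof. by move=> lt_qk; rewrite /ord_of val_insubd lt_qk. Qed.

Lemma ord_of_val k (k_gt0 : (0 < k)%N) (i : 'I_k) : ord_of k_gt0 i = i.
Proof. exact/val_inj/val_ord_of. Qed.

Lemma sum_rows_last (V : nmodType) (k : nat) (g : nat -> V) (c : V) : (0 < k)%N ->
  \sum_(r < k) (if (r < k.-1)%N then g r else c) = \sum_(0 <= q < k.-1) g q + c.
Proof.
case: k => // k _ /=; rewrite big_ord_recr /= ltnn big_mkord.
by congr (_ + _); apply: eq_bigr => r _; rewrite ltn_ord.
Qed.

Section PrefixSums.
Variables (V : zmodType) (n : nat) (f : 'I_n -> V).
Hypothesis n_gt0 : (0 < n)%N.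

Definition symbol (s : 'S_n) (q : nat) : V := f (s (ord_of n_gt0 q)).

Definition prefix (s : 'S_n) (a : nat) : V := \sum_(0 <= q < a) symbol s q.

Lemma prefixS s a : prefix s a.+1 = prefix s a + symbol s a.
Proof. exact: big_nat_recr. Qed.

Lemma symbol_inv (s : 'S_n) (y : 'I_n) : symbol s ((s^-1)%g y) = f y.
Proof. by rewrite /symbol ord_of_val permKV. Qed.

Lemma prefix_ord s a : (a <= n)%N -> prefix s a = \sum_(i : 'I_n | (i < a)%N) f (s i).
Proof.
move=> le_an; rewrite /prefix big_mkord (big_ord_widen _ (symbol s) le_an).
by apply: eq_bigr => i _; rewrite /symbol ord_of_val.
Qed.

Lemma prefix_tperm_in s (u v : 'I_n) a : (u < a)%N -> (v < a)%N -> (a <= n)%N ->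
  prefix (tperm u v * s)%g a = prefix s a.
Proof.
move=> lt_ua lt_va le_an; rewrite !prefix_ord //.
rewrite [RHS](reindex_inj (@perm_inj _ (tperm u v))) /=.
by apply: eq_big => [i|i _]; [case: tpermP => [->|->|] //; rewrite lt_ua lt_va|rewrite permM].
Qed.

Lemma prefix_tperm_out s (u v : 'I_n) a : (a <= u)%N -> (a <= v)%N ->
  prefix (tperm u v * s)%g a = prefix s a.
Proof.
move=> le_au le_av; rewrite /prefix; apply: eq_big_nat => q /andP [_ lt_qa].
have lt_qn : (q < n)%N by have := ltn_ord u; lia.
rewrite /symbol permM tpermD //;
  [apply: contraTneq le_au | apply: contraTneq le_av] => ->;
  by rewrite val_ord_of // -ltnNge.
Qed.

End PrefixSums.

Section Construction.
Variables (F : finFieldType) (t : nat).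
Hypothesis t_gt0 : (0 < t)%N.

Local Notation n := (3 * t)%N.

Fact three_t_gt0 : (0 < n)%N. Proof. by rewrite muln_gt0. Qed.
Fact two_t_gt0 : (0 < 2 * t)%N. Proof. by rewrite muln_gt0. Qed.
Fact pred_t_lt : (t.-1 < t)%N. Proof. by rewrite ltn_predL. Qed.

Local Notation pos := (ord_of three_t_gt0).
Local Notation e := (fun i : 'I_n => delta_mx 0 i : 'rV[F]_n).
Local Notation x := (symbol e three_t_gt0).
Local Notation pre := (prefix e three_t_gt0).
Local Notation last_row := (Ordinal pred_t_lt).

Definition loc (y : 'I_n) (s : 'S_n) : nat := (s^-1)%g y.

Lemma loc_eq y (s : 'S_n) i : s i = y -> loc y s = i.
Proof. by move=> <-; rewrite /loc permK. Qed.

(* The copy indices are sized so that [partner] below maps the head copies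
   [(q, i)] and the tail copies [(q, l)] injectively into the mid copies. *)
Definition head_col := ('S_n * ('I_t.+1 * 'I_(2 * t).+1))%type.
Definition mid_col := ('S_n * ('I_(2 * t) * 'I_(2 * t).+1))%type.
Definition tail_col := ('S_n * ('I_t * 'I_(2 * t)))%type.
Definition column := (head_col + mid_col + tail_col)%type.

Local Notation Head s j := (inl (inl (s, j))).
Local Notation Mid s j := (inl (inr (s, j))).
Local Notation Tail s j := (inr (s, j)).

Definition cell (c : column) (r : 'I_t) : 'rV[F]_n :=
  match c with
  | Head s _ => x s r
  | Mid s _ => if (r < t.-1)%N then x s (t.+1 + r) else pre s t.+1
  | Tail s _ => if (r < t.-1)%N then x s ((2 * t).+1 + r) else pre s (2 * t).+1
  end.

Lemma head_sum s j : \sum_r cell (Head s j) r = pre s t.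
Proof. by rewrite /prefix big_mkord. Qed.

Lemma mid_sum s j : \sum_r cell (Mid s j) r = pre s (2 * t).
Proof.
rewrite (sum_rows_last (fun q => x s (t.+1 + q))) //.
rewrite addrC /prefix [RHS](big_cat_nat _ (n := t.+1)) //=; last by lia.
congr (_ + _); rewrite -[t.+1]add0n big_addn.
have -> : (2 * t - t.+1 = t.-1)%N by lia.
by apply: eq_bigr => q _; rewrite addnC.
Qed.

Definition pull_in (y : 'I_n) (s : 'S_n) (q : 'I_t.+1) : 'S_n :=
  (tperm (pos q) (pos t) * tperm (pos t) ((s^-1)%g y) * s)%g.

Definition push_out (y : 'I_n) (s : 'S_n) (q : 'I_t) : 'S_n :=
  (tperm (pos (2 * t + q)) (pos (2 * t)) * tperm ((s^-1)%g y) (pos (2 * t)) * s)%g.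

Lemma loc_pull_in y s q : loc y (pull_in y s q) = q.
Proof.
have -> : loc y (pull_in y s q) = pos q by apply: loc_eq; rewrite !permM !tpermL permKV.
by rewrite val_ord_of //; have := ltn_ord q; lia.
Qed.

Lemma loc_push_out y s q : loc y (push_out y s q) = (2 * t + q)%N.
Proof.
have -> : loc y (push_out y s q) = pos (2 * t + q).
  by apply: loc_eq; rewrite !permM tpermL tpermR permKV.
by rewrite val_ord_of //; have := ltn_ord q; lia.
Qed.

Lemma prefix_pull_in y s q : (t <= loc y s)%N ->
  pre (pull_in y s q) t.+1 = pre s t + e y.
Proof.
move=> le_t_loc; have lt_tn : (t < n)%N by lia.
rewrite /pull_in -mulgA prefix_tperm_in ?val_ord_of //; last by have := ltn_ord q; lia.
rewrite prefixS prefix_tperm_out ?val_ord_of //.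
by rewrite /symbol permM tpermL permKV.
Qed.

Lemma prefix_push_out y s q : (loc y s <= 2 * t)%N ->
  pre (push_out y s q) (2 * t) + e y = pre s (2 * t).+1.
Proof.
move=> le_loc_2t; have lt_2tn : (2 * t < n)%N by lia.
rewrite /push_out -mulgA prefix_tperm_out ?val_ord_of ?leq_addr //;
  last by have := ltn_ord q; lia.
rewrite -(@prefix_tperm_in _ _ _ _ s ((s^-1)%g y) (pos (2 * t))) ?val_ord_of //.
by rewrite prefixS /symbol permM tpermR permKV.
Qed.

Definition partner (y : 'I_n) (c : column) : option column :=
  match c with
  | Head s (q, i) =>
      if (t <= loc y s)%N then Some (Mid (pull_in y s q) (ord_of two_t_gt0 (loc y s - t), i))
      else None
  | Mid _ _ => None
  | Tail s (q, l) =>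
      if (loc y s <= 2 * t)%N then Some (Mid (push_out y s q) (l, inord (loc y s)))
      else None
  end.

Definition key (y : 'I_n) (c : column) : bool :=
  if c is Mid s _ then (t < loc y s < 2 * t)%N else true.

Definition recovery_set y c : {set column} := c |: [set d | partner y c == Some d].

Lemma partner_not_key y c d : partner y c = Some d -> ~~ key y d.
Proof.
case: c => [[[s [q i]]|[s j]]|[s [q l]]] //=; case: ifP => // _ [<-] /=.
  by rewrite loc_pull_in; have := ltn_ord q; lia.
by rewrite loc_push_out; lia.
Qed.

Lemma pull_in_inj y s s' q q' : loc y s = loc y s' ->
  pull_in y s q = pull_in y s' q' -> s = s' /\ q = q'.
Proof.
move=> eq_loc eq_pull.
have eq_q : q = q' by apply/val_inj; rewrite /= -(loc_pull_in y s q) eq_pull loc_pull_in.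
have eq_pos : (s^-1)%g y = (s'^-1)%g y by apply/val_inj.
by move: eq_pull; rewrite /pull_in eq_q eq_pos => /mulgI.
Qed.

Lemma push_out_inj y s s' q q' : loc y s = loc y s' ->
  push_out y s q = push_out y s' q' -> s = s' /\ q = q'.
Proof.
move=> eq_loc eq_push.
have eq_q : q = q'.
  by apply/val_inj/eqP; rewrite -(eqn_add2l (2 * t)) -(loc_push_out y s) eq_push loc_push_out.
have eq_pos : (s^-1)%g y = (s'^-1)%g y by apply/val_inj.
by move: eq_push; rewrite /push_out eq_q eq_pos => /mulgI.
Qed.

Lemma partner_inj y c c' d : partner y c = Some d -> partner y c' = Some d -> c = c'.
Proof.
have lt_sub s : (loc y s - t < 2 * t)%N by have := ltn_ord ((s^-1)%g y); rewrite /loc; lia.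
case: c => [[[s [q i]]|[s j]]|[s [q l]]] //=; case: ifP => // le_s [<-];
case: c' => [[[s' [q' i']]|[s' j']]|[s' [q' l']]] //=; case: ifP => // le_s' [].
- move=> eq_pull /(congr1 (@nat_of_ord _)) + <-; rewrite !val_ord_of ?lt_sub // => eq_sub.
  have eq_loc : loc y s' = loc y s by lia.
  by have [-> ->] := pull_in_inj eq_loc eq_pull.
- move=> /(congr1 (loc y)); rewrite loc_pull_in loc_push_out => eq_loc _ _.
  by exfalso; have := ltn_ord q; lia.
- move=> /(congr1 (loc y)); rewrite loc_pull_in loc_push_out => eq_loc _ _.
  by exfalso; have := ltn_ord q'; lia.
- move=> eq_push <- /(congr1 (@nat_of_ord _)); rewrite !inordK // => eq_loc.
  by have [-> ->] := push_out_inj eq_loc eq_push.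
Qed.

Lemma recovery_set_disjoint y c c' : key y c -> key y c' -> c != c' ->
  [disjoint recovery_set y c & recovery_set y c'].
Proof.
move=> key_c key_c' neq_cc'; apply/pred0P => d /=; rewrite !inE.
apply/negP => /andP [/orP [/eqP dc | /eqP pc] /orP [/eqP dc' | /eqP pc']].
- by move: neq_cc'; rewrite -dc -dc' eqxx.
- by move: key_c; rewrite -dc (negbTE (partner_not_key pc')).
- by move: key_c'; rewrite -dc' (negbTE (partner_not_key pc)).
- by move: neq_cc'; rewrite (partner_inj pc pc') eqxx.
Qed.

Lemma recovery_set_spans y c : key y c -> delta_mx 0 y \in span_of cell (recovery_set y c).
Proof.
have self : c \in recovery_set y c by rewrite setU11.
have mate d : partner y c = Some d -> d \in recovery_set y c.
  by move=> pc; rewrite !inE pc eqxx orbT.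
have lt_loc s : (loc y s < n)%N by apply: ltn_ord.
case: c self mate => [[[s [q i]]|[s j]]|[s [q l]]] self mate key_c.
- have [lt_loc_t|le_t_loc] := ltnP (loc y s) t.
    have -> : delta_mx 0 y = cell (Head s (q, i)) (Ordinal lt_loc_t) by rewrite /= symbol_inv.
    exact: cell_in_span.
  set d : column := Mid (pull_in y s q) (ord_of two_t_gt0 (loc y s - t), i).
  have -> : delta_mx 0 y = cell d last_row - \sum_r cell (Head s (q, i)) r.
    by rewrite head_sum /= ltnn prefix_pull_in // addrC addKr.
  apply: memvB; [apply: cell_in_span | exact: col_sum_in_span].
  by apply: mate; rewrite /= le_t_loc.
- have lt_row : (loc y s - t.+1 < t)%N by move: key_c => /=; lia.
  have -> : delta_mx 0 y = cell (Mid s j) (Ordinal lt_row).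
    by rewrite /= ifT ?subnKC ?symbol_inv //; move: key_c => /=; lia.
  exact: cell_in_span.
- have [lt_2t_loc|le_loc_2t] := ltnP (2 * t) (loc y s).
    have lt_row : (loc y s - (2 * t).+1 < t)%N by have := lt_loc s; lia.
    have -> : delta_mx 0 y = cell (Tail s (q, l)) (Ordinal lt_row).
      by rewrite /= ifT ?subnKC ?symbol_inv //; have := lt_loc s; lia.
    exact: cell_in_span.
  set d : column := Mid (push_out y s q) (l, inord (loc y s)).
  have -> : delta_mx 0 y = cell (Tail s (q, l)) last_row - \sum_r cell d r.
    by rewrite mid_sum /= ltnn -(@prefix_push_out y s q) // addrC addKr.
  apply: memvB; [exact: cell_in_span | apply: col_sum_in_span].
  by apply: mate; rewrite /= le_loc_2t.
Qed.

Definition key_count : nat :=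
  (n`! * (t.+1 * (2 * t).+1) + t.-1 * n.-1`! * (2 * t * (2 * t).+1) + n`! * (t * (2 * t)))%N.

Lemma card_key y : #|[set c | key y c]| = key_count.
Proof.
rewrite -sum1_card (eq_bigl (key y)) => [|c]; last by rewrite inE.
rewrite !big_sumType /= !sum1_card !(eq_cardT (A := xpredT)) // -!cardT.
rewrite (eq_card (B := setX [set s : 'S_n | (s^-1)%g y \in [pred q : 'I_n | (t < q < 2 * t)%N]]
                           [set: 'I_(2 * t) * 'I_(2 * t).+1])) => [|[s j]]; last first.
  by rewrite !inE andbT.
rewrite cardsX cardsT card_perm_inv_in card_ord_range; last by lia.
have -> : (2 * t - t.+1 = t.-1)%N by lia.
by rewrite !card_prod card_Sn !card_ord /key_count !mulnA.
Qed.

Lemma card_column :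
  #|{: column}| = (n`! * (t.+1 * (2 * t).+1 + 2 * t * (2 * t).+1 + t * (2 * t)))%N.
Proof. by rewrite !card_sum !card_prod !card_Sn !card_ord !mulnDr. Qed.

Lemma cell_kPIR : is_kPIR key_count (col_code cell).
Proof.
apply: col_code_kPIR => y; exists [set c | key y c], (recovery_set y).
split; [exact: card_key | move=> c d | move=> c]; rewrite !inE.
- exact: recovery_set_disjoint.
- exact: recovery_set_spans.
Qed.

Lemma key_count_ratio :
  (key_count * (24 * t ^ 2 + 15 * t + 3) = (16 * t ^ 2 + 7 * t + 1) * #|{: column}|)%N.
Proof.
rewrite card_column /key_count.
have -> : n`! = (n * n.-1`!)%N.
  by rewrite -[in LHS](prednK three_t_gt0) factS (prednK three_t_gt0).
move: n.-1`! => f.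
by case: t t_gt0 => // t' _; rewrite !expnS expn0; lia.
Qed.

End Construction.

Theorem theorem9 (t : nat) (ht : (0 < t)%N) :
  exists (F : finFieldType) (m k : nat) (C : array_code F t m (3 * t)),
    (0 < m)%N /\ is_kPIR k C /\
    ((16 * t ^ 2 + 7 * t + 1)%:R / (24 * t ^ 2 + 15 * t + 3)%:R : rat)
      <= k%:R / m%:R.
Proof.
exists 'F_2, #|{: column t}|, (key_count t), (col_code (cell 'F_2 ht)).
have m_gt0 : (0 < #|{: column t}|)%N by rewrite card_column muln_gt0 fact_gt0 !addn_gt0 !muln_gt0.
split=> //; split; first exact: cell_kPIR.
suff -> : (key_count t)%:R / #|{: column t}|%:R =
  ((16 * t ^ 2 + 7 * t + 1)%:R / (24 * t ^ 2 + 15 * t + 3)%:R : rat) by [].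
by apply/eqP; rewrite eqr_div ?pnatr_eq0 -?lt0n ?addn_gt0 ?orbT // -!natrM key_count_ratio.
Qed.
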